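(* Consider the randomized algorithm Channel-Screening in which, in every round, every active station, independently for each channel $\beta\in\{1,\dots,b\}$ and independently of all other random choices, transmits a message on channel $\beta$ with probability $k^{-\beta/b}$, until a message is heard on some channel. Let $t$ be a time step and let $1\le\beta\le b$ be such that $k^{(\beta-1)/b}\le |W(t)|\le k^{\beta/b}$, where $W(t)$ is the set of stations active at time step $t$. Then the probability that a message is heard on channel $\beta$ at time step $t$ (i.e. exactly one station transmits on $\beta$ at time step $t$) is at least $\frac{1}{2ek^{1/b}}$.
   Context: Model: multi-channel single-hop radio network with $b$ channels numbered $1,\dots,b$, synchronous rounds, no collision detection; a message on a channel in a round is heard by everybody iff exactly one station transmits on that channel in that round. At most $k$ stations are activated spontaneously at arbitrary times; $k$ is known to the stations, and only active stations execute the algorithm. *)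

From HB Require Import structures.
From mathcomp Require Import all_boot all_order all_algebra.
From mathcomp Require Import all_classical all_reals all_analysis.

Import Order.TTheory GRing.Theory Num.Theory.
Local Open Scope ring_scope.

(* Channels 1..b are represented by j : 'I_b, channel number j.+1.
   Stations active at time t: W(t) represented by 'I_n, n = |W(t)|. *)

Definition tx_prob (R : realType) (k b c : nat) : R :=
  (k%:R : R) `^ (- (c%:R / b%:R)).

(* One round's random choices: w i j = station i transmits on channel j.+1.
   All choices are independent; weight of an outcome is the product. *)
Definition outcome_weight (R : realType) (k b n : nat)
    (w : {ffun 'I_n -> {ffun 'I_b -> bool}}) : R :=
  \prod_(i < n) \prod_(j < b)
     (if w i j then tx_prob R k b j.+1 else 1 - tx_prob R k b j.+1).

Definition heard_prob (R : realType) (k b n : nat) (j : 'I_b) : R :=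
  \sum_(w : {ffun 'I_n -> {ffun 'I_b -> bool}} | #|[pred i : 'I_n | w i j]| == 1%N)
     outcome_weight R k b n w.

From HB Require Import structures.
From mathcomp Require Import all_boot all_order all_algebra.
From mathcomp Require Import all_classical all_reals all_analysis.
From mathcomp Require Import ring lra.
Import Order.TTheory GRing.Theory Num.Theory.
Local Open Scope ring_scope.

(* With n stations each transmitting on channel j with probability p, the
   probability of hearing a message there is n p (1 - p)^(n-1).  The hypothesis
   on n gives k^(-1/b) <= n p <= 1, and n p <= 1 forces (1 - p)^(n-1) >= 1/e
   (from e^x >= 1 + x at x = 1/(n-1)); hence the probability is at least
   k^(-1/b)/e, which is better than claimed by a factor 2. *)

Section ExactlyOne.
Variable R : comNzRingType.

Lemma natr_forall (I : finType) (P : pred I) :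
  ([forall i, P i])%:R = \prod_i ((P i)%:R : R).
Proof.
have [/forallP allP | /forallPn [i Pi]] := boolP [forall i, P i].
  by rewrite big1 // => i _; rewrite allP.
by rewrite (bigD1 i) //= (negbTE Pi) mul0r.
Qed.

Lemma natr_card_eq1 (I : finType) (P : pred I) :
  ((#|P| == 1%N)%:R : R) = \sum_i0 ([forall i, P i == (i == i0)])%:R.
Proof.
case: (pickP [pred i0 | [forall i, P i == (i == i0)]]) => [i0 /= Pi0 | none].
  have singleton i1 : [forall i, P i == (i == i1)] = (i1 == i0).
    apply/idP/eqP => [/forallP/(_ i0)/eqP | -> //].
    by move/forallP/(_ i0)/eqP: Pi0 => ->; rewrite eqxx => /esym/eqP.
  rewrite (bigD1 i0) //= Pi0 big1 ?addr0 => [|i1]; last by rewrite singleton => /negbTE ->.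
  suff -> : #|P| == 1%N by [].
  by apply/card1P; exists i0 => i; move/forallP/(_ i)/eqP: Pi0.
rewrite big1 => [|i0 _]; last by move: (none i0) => /= ->.
case: card1P => // -[i0 Pi0].
suff : [forall i, P i == (i == i0)] by move: (none i0) => /= ->.
by apply/forallP => i; apply/eqP/Pi0.
Qed.

Variables (J : finType) (wt : J -> bool -> R).
Hypothesis wt_total : forall j, wt j true + wt j false = 1.

Lemma sum_ffun_prod_weight_at (j : J) (c : bool) :
  \sum_(v : {ffun J -> bool}) (v j == c)%:R * \prod_j' wt j' (v j') = wt j c.
Proof.
pose wt_c j' x := if j' == j then (x == c)%:R * wt j' x else wt j' x.
transitivity (\sum_(v : {ffun J -> bool}) \prod_j' wt_c j' (v j')).
  apply: eq_bigr => v _; rewrite [RHS](bigD1 j) //= [in RHS]/wt_c eqxx -mulrA.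
  congr (_ * _); rewrite (bigD1 j) //=; congr (_ * _).
  by apply: eq_bigr => j' /negbTE j'j; rewrite /wt_c j'j.
rewrite -(bigA_distr_bigA wt_c) (bigD1 j) //= [X in _ * X]big1 => [|j' /negbTE j'j].
  by rewrite mulr1 big_bool /wt_c eqxx; case: (c); rewrite /= ?mul1r ?mul0r ?addr0 ?add0r.
by rewrite big_bool /wt_c j'j /= wt_total.
Qed.

Lemma sum_exactly_one_true (I : finType) (j : J) :
  \sum_(w : {ffun I -> {ffun J -> bool}} | #|[pred i | w i j]| == 1%N)
     \prod_i \prod_j' wt j' (w i j')
  = #|I|%:R * wt j true * wt j false ^+ #|I|.-1.
Proof.
rewrite big_mkcond /=.
under eq_bigr => w _ do rewrite -mulrb -mulr_natl natr_card_eq1 mulr_suml.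
rewrite exchange_big /= -[in RHS]mulrA mulr_natl -sumr_const.
apply: eq_bigr => i0 _.
under eq_bigr => w _ do rewrite natr_forall -big_split /=.
rewrite -(bigA_distr_bigA (fun i (v : {ffun J -> bool}) =>
                            (v j == (i == i0))%:R * \prod_j' wt j' (v j'))).
under eq_bigr => i _ do rewrite sum_ffun_prod_weight_at.
rewrite (bigD1 i0) //= eqxx -(cardC1 i0) -prodr_const; congr (_ * _).
by apply: eq_bigr => i /negbTE ->.
Qed.

End ExactlyOne.

Lemma expRN1_le_expn_subr (R : realType) (n : nat) (p : R) :
  n%:R * p <= 1 -> expR (-1) <= (1 - p) ^+ n.-1.
Proof.
have expRN1_le1 : expR (-1) <= 1 :> R by rewrite expR_le1 lerN10.
case: n => [|[|m]] np1 /=; rewrite ?expr0 //.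
set M : R := m.+1%:R; have M_gt0 : 0 < M by rewrite ltr0n.
have {np1} np1 : (M + 1) * p <= 1 by rewrite /M -natr1 in np1.
have M_inv_ge0 : 0 <= M^-1 by rewrite invr_ge0 ltW.
have p_le1 : 0 <= 1 - p by nra.
have step : expR (- M^-1) <= 1 - p.
  rewrite expRN -[leLHS]mul1r ler_pdivrMr ?expR_gt0 //.
  apply: le_trans (ler_wpM2l p_le1 (expR_ge1Dx _)); rewrite -subr_ge0.
  have -> : (1 - p) * (1 + M^-1) - 1 = M^-1 * (1 - (M + 1) * p).
    by field; rewrite lt0r_neq0.
  by rewrite mulr_ge0 ?subr_ge0.
have -> : -1 = M * - M^-1 by rewrite mulrN mulfV ?lt0r_neq0.
by rewrite expRM_natl lerXn2r ?nnegrE ?(ltW (expR_gt0 _)).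
Qed.

Lemma exactly_one_prob_ge {R : realType} {n : nat} {a p : R} :
  0 <= a -> a <= n%:R * p -> n%:R * p <= 1 ->
  a * expR (-1) <= n%:R * p * (1 - p) ^+ n.-1.
Proof.
move=> a_ge0 lo hi.
by rewrite ler_pM ?(ltW (expR_gt0 _)) ?expRN1_le_expn_subr.
Qed.

Lemma powR_mul_tx_prob (R : realType) (k b c : nat) (x : R) : (0 < k)%N ->
  (k%:R : R) `^ x * tx_prob R k b c = (k%:R : R) `^ (x - c%:R / b%:R).
Proof. by move=> k_gt0; rewrite /tx_prob -powRD // pnatr_eq0 -lt0n k_gt0 implybT. Qed.

Lemma heard_probE (R : realType) (k b n : nat) (j : 'I_b) :
  let p := tx_prob R k b j.+1 in
  heard_prob R k b n j = n%:R * p * (1 - p) ^+ n.-1.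
Proof.
pose wt (j' : 'I_b) (x : bool) : R :=
  if x then tx_prob R k b j'.+1 else 1 - tx_prob R k b j'.+1.
have wt_total j' : wt j' true + wt j' false = 1 by rewrite addrC subrK.
rewrite /= -[n in RHS]card_ord -(@sum_exactly_one_true _ _ _ wt_total) /heard_prob.
apply: eq_bigr => w _; apply: eq_bigr => i _; apply: eq_bigr => j' _.
by rewrite /wt; case: (w i j').
Qed.

Theorem lemma3 (R : realType) (k b n : nat) (j : 'I_b) :
  (1 <= k)%N ->
  (k%:R : R) `^ ((nat_of_ord j)%:R / b%:R) <= n%:R ->
  (n%:R : R) <= (k%:R : R) `^ ((nat_of_ord j).+1%:R / b%:R) ->
  1 / (2 * expR 1 * (k%:R : R) `^ (1 / b%:R)) <= heard_prob R k b n j.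
Proof.
move=> k_gt0 lo hi; rewrite heard_probE.
set p := tx_prob R k b j.+1; set c := (k%:R : R) `^ (1 / b%:R).
have p_ge0 : 0 <= p by rewrite powR_ge0.
have c_gt0 : 0 < c by apply: powR_gt0; rewrite ltr0n.
have mass_lo : c^-1 <= n%:R * p.
  apply: le_trans (ler_wpM2r p_ge0 lo); rewrite powR_mul_tx_prob // -powRN.
  by have -> : (j%:R / b%:R - j.+1%:R / b%:R : R) = - (1 / b%:R) by rewrite -natr1; ring.
have mass_hi : n%:R * p <= 1.
  by apply: le_trans (ler_wpM2r p_ge0 hi) _; rewrite powR_mul_tx_prob // subrr powRr0.
have c_inv_ge0 : 0 <= c^-1 by rewrite invr_ge0 ltW.
apply: le_trans (exactly_one_prob_ge c_inv_ge0 mass_lo mass_hi).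
rewrite expRN -invfM mul1r lef_pV2 ?posrE ?mulr_gt0 ?expR_gt0 //.
by rewrite mulrC -mulrA ler_peMl ?mulr_ge0 ?(ltW c_gt0) ?expR_ge0 ?ler1n.
Qed.
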